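(* In $NOM$, writing $\phi\perp\!\!\!\perp\psi$ for $(\phi\rightarrow(\psi\rightarrow\phi))\wedge(\psi\rightarrow(\phi\rightarrow\psi))$, the following rules are derivable for all finite sequences $\Gamma,\Delta$ of formulas and all formulas $\phi,\psi,\chi$: from $\Gamma,\phi,\psi\vdash\phi$ and $\Gamma,\psi,\phi\vdash\psi$ infer $\Gamma\vdash\phi\perp\!\!\!\perp\psi$; from $\Gamma\vdash\phi\perp\!\!\!\perp\psi$ and $\Gamma,\phi,\psi,\Delta\vdash\chi$ infer $\Gamma,\psi,\phi,\Delta\vdash\chi$; from $\Gamma\vdash\phi\perp\!\!\!\perp\psi$ and $\Gamma,\psi,\phi,\Delta\vdash\chi$ infer $\Gamma,\phi,\psi,\Delta\vdash\chi$.
   Context: The propositional deductive system $NOM$: formulas are built from propositional letters using $\wedge$, $\rightarrow$, $\neg$. Sequents are $\phi_1,\ldots,\phi_n\vdash\psi$ ($n\ge0$) with antecedent a finite ordered sequence; commas denote concatenation. With $\Gamma$ a finite possibly empty sequence of formulas and $\phi,\psi,\chi$ formulas, the rules of $NOM$ are: (assumption) $\Gamma,\phi\vdash\phi$; (cut) $\Gamma\vdash\phi$, $\Gamma,\phi\vdash\psi$ $\Rightarrow$ $\Gamma\vdash\psi$; (paste) $\Gamma\vdash\phi$, $\Gamma\vdash\psi$ $\Rightarrow$ $\Gamma,\phi\vdash\psi$; (compatible exchange) $\Gamma,\phi,\psi\vdash\phi$, $\Gamma,\phi,\psi\vdash\chi$, $\Gamma,\psi,\phi\vdash\psi$ $\Rightarrow$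 $\Gamma,\psi,\phi\vdash\chi$; ($\wedge$-intro) $\Gamma\vdash\phi$, $\Gamma\vdash\psi$ $\Rightarrow$ $\Gamma\vdash\phi\wedge\psi$; ($\wedge$-elim) $\Gamma\vdash\phi\wedge\psi$ $\Rightarrow$ $\Gamma\vdash\phi$ and $\Rightarrow$ $\Gamma\vdash\psi$; ($\rightarrow$-intro) $\Gamma,\phi\vdash\psi$ $\Rightarrow$ $\Gamma\vdash\phi\rightarrow\psi$; ($\rightarrow$-elim) $\Gamma\vdash\phi\rightarrow\psi$ $\Rightarrow$ $\Gamma,\phi\vdash\psi$; (excluded middle) $\Gamma,\phi\vdash\psi$, $\Gamma,\neg\phi\vdash\psi$ $\Rightarrow$ $\Gamma\vdash\psi$; (explosion) $\Gamma\vdash\neg\phi$ $\Rightarrow$ $\Gamma,\phi\vdash\psi$. A rule schema is derivable if in every instance its conclusion can be derived from its premises using these rules. *)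

From Stdlib Require Import List.
Import ListNotations.

Inductive formula : Type :=
| Var : nat -> formula
| And : formula -> formula -> formula
| Imp : formula -> formula -> formula
| Neg : formula -> formula.

Record sequent : Type := Seq { ante : list formula ; succ : formula }.

Inductive NOM_from (P : sequent -> Prop) : sequent -> Prop :=
| nom_prem : forall s, P s -> NOM_from P s
| nom_assumption : forall G phi, NOM_from P (Seq (G ++ [phi]) phi)
| nom_cut : forall G phi psi,
    NOM_from P (Seq G phi) -> NOM_from P (Seq (G ++ [phi]) psi) ->
    NOM_from P (Seq G psi)
| nom_paste : forall G phi psi,
    NOM_from P (Seq G phi) -> NOM_from P (Seq G psi) ->
    NOM_from P (Seq (G ++ [phi]) psi)
| nom_exch : forall G phi psi chi,
    NOM_from P (Seq (G ++ [phi; psi]) phi) ->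
    NOM_from P (Seq (G ++ [phi; psi]) chi) ->
    NOM_from P (Seq (G ++ [psi; phi]) psi) ->
    NOM_from P (Seq (G ++ [psi; phi]) chi)
| nom_and_i : forall G phi psi,
    NOM_from P (Seq G phi) -> NOM_from P (Seq G psi) ->
    NOM_from P (Seq G (And phi psi))
| nom_and_e1 : forall G phi psi,
    NOM_from P (Seq G (And phi psi)) -> NOM_from P (Seq G phi)
| nom_and_e2 : forall G phi psi,
    NOM_from P (Seq G (And phi psi)) -> NOM_from P (Seq G psi)
| nom_imp_i : forall G phi psi,
    NOM_from P (Seq (G ++ [phi]) psi) -> NOM_from P (Seq G (Imp phi psi))
| nom_imp_e : forall G phi psi,
    NOM_from P (Seq G (Imp phi psi)) -> NOM_from P (Seq (G ++ [phi]) psi)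
| nom_em : forall G phi psi,
    NOM_from P (Seq (G ++ [phi]) psi) -> NOM_from P (Seq (G ++ [Neg phi]) psi) ->
    NOM_from P (Seq G psi)
| nom_explosion : forall G phi psi,
    NOM_from P (Seq G (Neg phi)) -> NOM_from P (Seq (G ++ [phi]) psi).

Definition derivable_rule (prems : list sequent) (concl : sequent) : Prop :=
  NOM_from (fun s => In s prems) concl.

Definition indep (phi psi : formula) : formula :=
  And (Imp phi (Imp psi phi)) (Imp psi (Imp phi psi)).

From Stdlib Require Import List.
Import ListNotations.

(* The exchange rule only acts at the end of the antecedent; to exchange
   [phi; psi] in front of a tail D, first discharge D into the succedent
   with ->-intro, exchange, and restore D with ->-elim.  Independence
   [indep phi psi] packages exactly the two side premises of exchange. *)

Fixpoint imps (D : list formula) (c : formula) : formula :=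
  match D with [] => c | a :: D' => Imp a (imps D' c) end.

Section Derivations.

Variable P : sequent -> Prop.

Lemma NOM_imps_intro D G c :
  NOM_from P (Seq (G ++ D) c) -> NOM_from P (Seq G (imps D c)).
Proof.
  revert G; induction D as [|a D IH]; intros G H; simpl.
  - rewrite app_nil_r in H; exact H.
  - apply nom_imp_i, IH; rewrite <- app_assoc; exact H.
Qed.

Lemma NOM_imps_elim D G c :
  NOM_from P (Seq G (imps D c)) -> NOM_from P (Seq (G ++ D) c).
Proof.
  revert G; induction D as [|a D IH]; intros G H; simpl in H.
  - rewrite app_nil_r; exact H.
  - change (a :: D) with ([a] ++ D); rewrite app_assoc.
    apply IH, nom_imp_e; exact H.
Qed.

Lemma NOM_exch_app G D phi psi chi :
  NOM_from P (Seq (G ++ [phi; psi]) phi) ->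
  NOM_from P (Seq (G ++ [psi; phi]) psi) ->
  NOM_from P (Seq (G ++ [phi; psi] ++ D) chi) ->
  NOM_from P (Seq (G ++ [psi; phi] ++ D) chi).
Proof.
  intros Hphi Hpsi H; rewrite app_assoc; apply NOM_imps_elim.
  apply nom_exch; [exact Hphi | | exact Hpsi].
  apply NOM_imps_intro; rewrite <- app_assoc; exact H.
Qed.

Lemma NOM_imp2_elim G a b c :
  NOM_from P (Seq G (Imp a (Imp b c))) -> NOM_from P (Seq (G ++ [a; b]) c).
Proof. exact (NOM_imps_elim [a; b] G c). Qed.

Lemma NOM_indep_intro G phi psi :
  NOM_from P (Seq (G ++ [phi; psi]) phi) ->
  NOM_from P (Seq (G ++ [psi; phi]) psi) ->
  NOM_from P (Seq G (indep phi psi)).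
Proof.
  intros Hphi Hpsi; apply nom_and_i;
    [exact (NOM_imps_intro [phi; psi] _ _ Hphi)
    | exact (NOM_imps_intro [psi; phi] _ _ Hpsi)].
Qed.

Lemma NOM_indep_elim_l G phi psi :
  NOM_from P (Seq G (indep phi psi)) -> NOM_from P (Seq (G ++ [phi; psi]) phi).
Proof. intro H; apply NOM_imp2_elim; exact (nom_and_e1 _ _ _ _ H). Qed.

Lemma NOM_indep_elim_r G phi psi :
  NOM_from P (Seq G (indep phi psi)) -> NOM_from P (Seq (G ++ [psi; phi]) psi).
Proof. intro H; apply NOM_imp2_elim; exact (nom_and_e2 _ _ _ _ H). Qed.

Lemma NOM_indep_sym G phi psi :
  NOM_from P (Seq G (indep phi psi)) -> NOM_from P (Seq G (indep psi phi)).
Proof.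
  intro H; apply NOM_indep_intro;
    [exact (NOM_indep_elim_r _ _ _ H) | exact (NOM_indep_elim_l _ _ _ H)].
Qed.

Lemma NOM_exch_indep G D phi psi chi :
  NOM_from P (Seq G (indep phi psi)) ->
  NOM_from P (Seq (G ++ [phi; psi] ++ D) chi) ->
  NOM_from P (Seq (G ++ [psi; phi] ++ D) chi).
Proof.
  intro H; apply NOM_exch_app;
    [exact (NOM_indep_elim_l _ _ _ H) | exact (NOM_indep_elim_r _ _ _ H)].
Qed.

End Derivations.

Lemma derivable_rule_prem prems s : In s prems -> derivable_rule prems s.
Proof. exact (nom_prem _ s). Qed.

Theorem proposition4p7 :
  forall (G D : list formula) (phi psi chi : formula),
    derivable_rule
      [Seq (G ++ [phi; psi]) phi; Seq (G ++ [psi; phi]) psi]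
      (Seq G (indep phi psi))
    /\ derivable_rule
      [Seq G (indep phi psi); Seq (G ++ [phi; psi] ++ D) chi]
      (Seq (G ++ [psi; phi] ++ D) chi)
    /\ derivable_rule
      [Seq G (indep phi psi); Seq (G ++ [psi; phi] ++ D) chi]
      (Seq (G ++ [phi; psi] ++ D) chi).
Proof.
  intros G D phi psi chi; split; [|split].
  - apply NOM_indep_intro; apply derivable_rule_prem; simpl; auto.
  - apply NOM_exch_indep; apply derivable_rule_prem; simpl; auto.
  - apply NOM_exch_indep; [apply NOM_indep_sym |];
      apply derivable_rule_prem; simpl; auto.
Qed.
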